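(* Let $n,k,l$ be nonnegative integers with $k+l\le n$, and $\alpha,\beta>-1$. The constrained dual Bernstein polynomials have the B\'ezier–Bernstein representation \[ D^{(n,k,l)}_i(x;\alpha,\beta)=\sum_{j=k}^{n-l}C_{ij}(n,k,l,\alpha,\beta)\,B^n_j(x)\qquad(k\le i\le n-l), \] where \[ C_{ij}(n,k,l,\alpha,\beta):=U_i\,U_j\,c_{i-k,\,j-k}(n-k-l,\ \alpha+2l,\ \beta+2k),\qquad U_i:=\binom{n-k-l}{i-k}\binom{n}{i}^{-1}, \] and $c_{pq}(N,a,b)$ denotes the B\'ezier coefficients of the unconstrained dual Bernstein polynomials, $D^N_p(x;a,b)=\sum_{q=0}^N c_{pq}(N,a,b)B^N_q(x)$ (explicitly, $c_{pq}(N,a,b)=\frac{1}{B(a+1,b+1)}\sum_{m=0}^N\frac{(2m/(a+b+1)+1)(b+1)_m(a+b+1)_m}{m!\,(a+1)_m}Q_m(p;b,a,N)Q_m(q;b,a,N)$).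
   Context: For $a,b>-1$ define the inner product $\langle f,g\rangle_{a,b}:=\int_0^1(1-x)^{a}x^{b}f(x)g(x)\,dx$. Bernstein polynomials: $B^n_i(x)=\binom ni x^i(1-x)^{n-i}$. The unconstrained dual Bernstein polynomials $D^N_p(x;a,b)$, $0\le p\le N$, are the unique polynomials of degree $\le N$ with $\langle D^N_p,B^N_q\rangle_{a,b}=\delta_{pq}$. For $k+l\le n$, $\Pi_n^{(k,l)}$ is the space of polynomials $P$ of degree $\le n$ with $P^{(i)}(0)=0$ for $0\le i\le k-1$ and $P^{(j)}(1)=0$ for $0\le j\le l-1$; it has basis $B^n_k,\ldots,B^n_{n-l}$. The constrained dual Bernstein polynomials $D^{(n,k,l)}_i(x;\alpha,\beta)\in\Pi_n^{(k,l)}$, $k\le i\le n-l$, are the unique elements of $\Pi_n^{(k,l)}$ with $\langle D^{(n,k,l)}_i,B^n_j\rangle_{\alpha,\beta}=\delta_{ij}$ for $i,j=k,\ldots,n-l$. Notation: $(c)_k:=\prod_{j=0}^{k-1}(c+j)$; $B(\lambda,\mu)$ is the beta function; Hahn polynomials $Q_m(x;a,b,N):={}_3F_2(-m,m+a+b+1,-x;a+1,-N;1)$. *)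

From Stdlib Require Import Reals Lra Lia.
Open Scope R_scope.

Definition rsum (m n : nat) (f : nat -> R) : R :=
  if (n <? m)%nat then 0 else sum_f_R0 (fun j => f (m + j)%nat) (n - m).

Definition Bern (n i : nat) (x : R) : R := C n i * x ^ i * (1 - x) ^ (n - i).

Definition weight (a b x : R) : R := Rpower (1 - x) a * Rpower x b.

Definition improper_int01 (h : R -> R) (v : R) : Prop :=
  forall eps, 0 < eps -> exists delta, 0 < delta /\
    forall s t, 0 < s < delta -> 1 - delta < t < 1 ->
      exists pr : Riemann_integrable h s t, Rabs (RiemannInt pr - v) < eps.

Definition wip (a b : R) (f g : R -> R) (v : R) : Prop :=
  improper_int01 (fun x => weight a b x * f x * g x) v.

Definition kron (i j : nat) : R := if Nat.eqb i j then 1 else 0.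

Fixpoint ffR (m i : nat) : R :=
  match i with
  | O => 1
  | S i' => ffR m i' * (INR m - INR i')
  end.

(* value at x of the i-th derivative of the polynomial sum_{m=0}^n d m x^m *)
Definition pderiv (d : nat -> R) (n i : nat) (x : R) : R :=
  sum_f_R0 (fun m => d m * ffR m i * x ^ (m - i)) n.

Definition is_poly_le (n : nat) (f : R -> R) : Prop :=
  exists d : nat -> R, forall x, f x = sum_f_R0 (fun m => d m * x ^ m) n.

Definition in_Pi (n k l : nat) (f : R -> R) : Prop :=
  exists d : nat -> R,
    (forall x, f x = sum_f_R0 (fun m => d m * x ^ m) n) /\
    (forall i, (i < k)%nat -> pderiv d n i 0 = 0) /\
    (forall j, (j < l)%nat -> pderiv d n j 1 = 0).

Definition is_udual (N : nat) (a b : R) (p : nat) (D : R -> R) : Prop :=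
  is_poly_le N D /\
  forall q, (q <= N)%nat -> wip a b D (Bern N q) (kron p q).

Definition is_cdual (n k l : nat) (al be : R) (i : nat) (D : R -> R) : Prop :=
  in_Pi n k l D /\
  forall j, (k <= j <= n - l)%nat -> wip al be D (Bern n j) (kron i j).

Definition U (n k l i : nat) : R := C (n - k - l) (i - k) / C n i.

(* C_ij(n,k,l,al,be) given the Bezier coefficients c of the unconstrained
   duals for (N,a,b) = (n-k-l, al+2l, be+2k) *)
Definition Ccoef (c : nat -> nat -> R) (n k l i j : nat) : R :=
  U n k l i * U n k l j * c (i - k)%nat (j - k)%nat.

(* Write N = n-k-l.  The proof rests on the factorisation
       Pi_n^(k,l) = { x^k (1-x)^l h(x) : deg h <= N },
   together with U_j B^n_j(x) = x^k (1-x)^l B^N_(j-k)(x) and the identity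
   (1-x)^a x^b (x^k (1-x)^l)^2 = (1-x)^(a+2l) x^(b+2k) for the weights.

   Existence: if g = D^N_(i-k)(.; al+2l, be+2k), then
   U_i x^k (1-x)^l g(x) lies in Pi_n^(k,l) and its weighted inner product
   with B^n_j equals (U_i/U_j) <g, B^N_(j-k)>_(al+2l,be+2k) = delta_ij; its
   Bernstein expansion is exactly sum_j C_ij B^n_j.
   Uniqueness: the difference E of two duals lies in Pi_n^(k,l), hence in
   the span of B^n_k, ..., B^n_(n-l), so <E,E>_(al,be) = 0; as the weight is
   positive and E continuous, E vanishes on (0,1) and thus everywhere. *)

From Stdlib Require Import Reals Lra Lia FunctionalExtensionality.
Open Scope R_scope.

Lemma sum_zero (f : nat -> R) (N : nat) :
  (forall m, (m <= N)%nat -> f m = 0) -> sum_f_R0 f N = 0.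
Proof.
  induction N as [|N IH]; intros Hf; simpl.
  - apply Hf; lia.
  - rewrite IH by (intros; apply Hf; lia). rewrite Hf by lia. ring.
Qed.

Lemma sum_single (f : nat -> R) (n i : nat) :
  (i <= n)%nat -> (forall m, m <> i -> f m = 0) -> sum_f_R0 f n = f i.
Proof.
  induction n as [|n IH]; intros Hi Hf.
  - replace i with 0%nat by lia. reflexivity.
  - simpl. destruct (Nat.eq_dec i (S n)) as [->|Hne].
    + rewrite sum_zero by (intros; apply Hf; lia). ring.
    + rewrite IH by (auto; lia). rewrite (Hf (S n)) by lia. ring.
Qed.

Lemma sum_drop_prefix (k : nat) : forall (f : nat -> R) (n : nat),
  (k <= n)%nat -> (forall t, (t < k)%nat -> f t = 0) ->
  sum_f_R0 f n = sum_f_R0 (fun r => f (k + r)%nat) (n - k).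
Proof.
  induction k as [|k IH]; intros f n Hk Hf.
  - rewrite Nat.sub_0_r. reflexivity.
  - rewrite decomp_sum, Hf, Rplus_0_l by lia.
    rewrite (IH (fun t => f (S t)) (pred n)) by (lia || intros; apply Hf; lia).
    replace (n - S k)%nat with (pred n - k)%nat by lia. reflexivity.
Qed.

Lemma ffR_S (m j : nat) : ffR (S m) (S j) = INR (S m) * ffR m j.
Proof.
  revert m. induction j as [|j IH]; intros m.
  - simpl. ring.
  - change (ffR (S m) (S j) * (INR (S m) - INR (S j)) =
            INR (S m) * (ffR m j * (INR m - INR j))).
    rewrite IH, !S_INR. ring.
Qed.

(* Discrete derivative of a falling factorial in its base: it is what
   the (1-x)-multiplication does to the derivatives at 1. *)
Lemma ffR_diff (m j : nat) : ffR (S m) (S j) - ffR m (S j) = INR (S j) * ffR m j.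
Proof.
  rewrite ffR_S. change (ffR m (S j)) with (ffR m j * (INR m - INR j)).
  rewrite !S_INR. ring.
Qed.

Lemma ffR_zero (m i : nat) : (m < i)%nat -> ffR m i = 0.
Proof.
  induction i as [|i IH]; intros H; [lia|]. simpl.
  destruct (Nat.eq_dec m i) as [->|Hne].
  - ring.
  - rewrite IH by lia. ring.
Qed.

Lemma ffR_pos (m i : nat) : (i <= m)%nat -> 0 < ffR m i.
Proof.
  induction i as [|i IH]; intros H; simpl; [lra|].
  apply Rmult_lt_0_compat; [apply IH; lia|].
  apply Rlt_0_minus, lt_INR. lia.
Qed.

Definition peval (d : nat -> R) (n : nat) (x : R) : R :=
  sum_f_R0 (fun m => d m * x ^ m) n.

Definition deg_le (d : nat -> R) (n : nat) : Prop :=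
  forall m, (n < m)%nat -> d m = 0.

Definition vanish0 (d : nat -> R) (k : nat) : Prop :=
  forall m, (m < k)%nat -> d m = 0.

(* peval d n has a zero of order >= l at 1: its first l derivatives at 1,
   sum_m d_m m^(j), vanish. *)
Definition vanish1 (d : nat -> R) (n l : nat) : Prop :=
  forall j, (j < l)%nat -> sum_f_R0 (fun m => d m * ffR m j) n = 0.

Lemma pderiv_at0 (d : nat -> R) (n i : nat) :
  pderiv d n i 0 = if (i <=? n)%nat then d i * ffR i i else 0.
Proof.
  unfold pderiv. destruct (Nat.leb_spec i n) as [Hi|Hi].
  - rewrite (sum_single _ n i Hi), Nat.sub_diag by
      (intros m Hm; destruct (Nat.lt_ge_cases m i);
       [rewrite ffR_zero by auto | rewrite pow_i by lia]; ring).
    simpl. ring.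
  - apply sum_zero. intros m Hm. rewrite ffR_zero by lia. ring.
Qed.

Lemma pderiv_at1 (d : nat -> R) (n j : nat) :
  pderiv d n j 1 = sum_f_R0 (fun m => d m * ffR m j) n.
Proof. unfold pderiv. apply sum_eq. intros. rewrite pow1. ring. Qed.

Lemma in_Pi_of_coeffs (n k l : nat) (d : nat -> R) (f : R -> R) :
  vanish0 d k -> vanish1 d n l -> (forall x, f x = peval d n x) -> in_Pi n k l f.
Proof.
  intros H0 H1 Hf. exists d. repeat split.
  - exact Hf.
  - intros i Hi. rewrite pderiv_at0.
    destruct (i <=? n)%nat; [rewrite H0 by lia|]; ring.
  - intros j Hj. rewrite pderiv_at1. apply H1, Hj.
Qed.

Lemma coeffs_of_in_Pi (n k l : nat) (f : R -> R) :
  in_Pi n k l f -> exists d, deg_le d n /\ vanish0 d k /\ vanish1 d n l /\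
    forall x, f x = peval d n x.
Proof.
  intros [d [Hf [H0 H1]]].
  exists (fun m => if (m <=? n)%nat then d m else 0).
  assert (Hin : forall m, (m <= n)%nat -> (m <=? n)%nat = true)
    by (intros m; apply Nat.leb_le).
  repeat split.
  - intros m Hm. destruct (Nat.leb_spec m n); [lia | reflexivity].
  - intros m Hm. specialize (H0 m Hm). rewrite pderiv_at0 in H0.
    destruct (Nat.leb_spec m n); [|reflexivity].
    pose proof (ffR_pos m m (le_n m)). apply Rmult_integral in H0. lra.
  - intros j Hj. rewrite <- (H1 j Hj), pderiv_at1. apply sum_eq.
    intros m Hm. rewrite (Hin m Hm). reflexivity.
  - intros x. rewrite Hf. apply sum_eq.
    intros m Hm. rewrite (Hin m Hm). reflexivity.
Qed.

Lemma in_Pi_sub (n k l : nat) (f g : R -> R) :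
  in_Pi n k l f -> in_Pi n k l g -> in_Pi n k l (fun x => f x - g x).
Proof.
  intros Hf Hg.
  destruct (coeffs_of_in_Pi n k l f Hf) as [d1 [_ [A1 [B1 E1]]]].
  destruct (coeffs_of_in_Pi n k l g Hg) as [d2 [_ [A2 [B2 E2]]]].
  apply (in_Pi_of_coeffs n k l (fun m => d1 m - d2 m)).
  - intros m Hm. rewrite A1, A2 by exact Hm. ring.
  - intros j Hj.
    rewrite (sum_eq _ (fun m => d1 m * ffR m j - d2 m * ffR m j)) by (intros; ring).
    rewrite minus_sum, B1, B2 by exact Hj. ring.
  - intros x. unfold peval.
    rewrite (sum_eq _ (fun m => d1 m * x ^ m - d2 m * x ^ m)) by (intros; ring).
    rewrite minus_sum, E1, E2. reflexivity.
Qed.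

Definition mulX (q : nat -> R) (m : nat) : R :=
  match m with O => 0 | S m' => q m' end.

Definition mul1m (q : nat -> R) (m : nat) : R := q m - mulX q m.

Lemma sum_mulX (q : nat -> R) (n : nat) (F : nat -> R) :
  sum_f_R0 (fun m => mulX q m * F m) (S n) = sum_f_R0 (fun m => q m * F (S m)) n.
Proof. rewrite decomp_sum by lia. simpl. ring. Qed.

Lemma sum_mul1m (q : nat -> R) (n : nat) (F : nat -> R) : deg_le q n ->
  sum_f_R0 (fun m => mul1m q m * F m) (S n) =
  sum_f_R0 (fun m => q m * (F m - F (S m))) n.
Proof.
  intros Hq. unfold mul1m.
  rewrite (sum_eq _ (fun m => q m * F m - mulX q m * F m)) by (intros; ring).
  rewrite minus_sum, sum_mulX, tech5, (Hq (S n)) by lia.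
  rewrite (sum_eq (fun m => q m * (F m - F (S m)))
             (fun m => q m * F m - q m * F (S m))) by (intros; ring).
  rewrite minus_sum. ring.
Qed.

Lemma peval_mul1m (q : nat -> R) (n : nat) (x : R) : deg_le q n ->
  peval (mul1m q) (S n) x = (1 - x) * peval q n x.
Proof.
  intros Hq. unfold peval. rewrite sum_mul1m, scal_sum by exact Hq.
  apply sum_eq. intros. simpl. ring.
Qed.

Lemma deg_le_mul1m (q : nat -> R) (n : nat) : deg_le q n -> deg_le (mul1m q) (S n).
Proof.
  intros Hq [|m] Hm; [lia|]. unfold mul1m, mulX. rewrite !Hq by lia. ring.
Qed.

Lemma vanish0_mul1m (q : nat -> R) (k : nat) : vanish0 (mul1m q) k <-> vanish0 q k.
Proof.
  split; intros H.
  - intros m Hm. induction m as [|m IH].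
    + pose proof (H 0%nat Hm) as E. unfold mul1m, mulX in E. lra.
    + pose proof (H (S m) Hm) as E. unfold mul1m, mulX in E. rewrite IH in E by lia. lra.
  - intros [|m] Hm; unfold mul1m, mulX; rewrite !H by lia; ring.
Qed.

Lemma vanish1_mul1m (q : nat -> R) (n l : nat) : deg_le q n ->
  vanish1 (mul1m q) (S n) (S l) <-> vanish1 q n l.
Proof.
  intros Hq.
  assert (Hj : forall j, sum_f_R0 (fun m => mul1m q m * ffR m (S j)) (S n) =
                         - INR (S j) * sum_f_R0 (fun m => q m * ffR m j) n).
  { intros j. rewrite sum_mul1m, scal_sum by exact Hq. apply sum_eq. intros m _.
    replace (ffR m (S j) - ffR (S m) (S j)) with (- (INR (S j) * ffR m j))
      by (rewrite <- ffR_diff; ring). ring. }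
  assert (Hpos : forall j, 0 < INR (S j)) by (intros; apply lt_0_INR; lia).
  split; intros H j Hjl.
  - specialize (H (S j) ltac:(lia)). rewrite Hj in H.
    apply Rmult_integral in H. specialize (Hpos j). destruct H; [lra | exact H].
  - destruct j as [|j].
    + rewrite sum_mul1m by exact Hq. apply sum_zero. intros. simpl. ring.
    + rewrite Hj, H by lia. ring.
Qed.

(* Factor theorem at x = 1: a polynomial vanishing at 1 is (1-x) q, with
   q given by partial sums of the coefficients. *)
Lemma mul1m_divide (p : nat -> R) (n : nat) : deg_le p (S n) ->
  sum_f_R0 p (S n) = 0 -> exists q, deg_le q n /\ p = mul1m q.
Proof.
  intros Hp Hsum.
  exists (fun m => if (m <=? n)%nat then sum_f_R0 p m else 0). split.
  - intros m Hm. destruct (Nat.leb_spec m n); [lia | reflexivity].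
  - apply functional_extensionality. intros [|m]; unfold mul1m, mulX.
    + simpl. ring.
    + destruct (Nat.leb_spec (S m) n); destruct (Nat.leb_spec m n); try lia.
      * simpl. ring.
      * replace m with n in * by lia. rewrite tech5 in Hsum. lra.
      * rewrite Hp by lia. ring.
Qed.

Lemma mul_Xpow (k N : nat) (e : nat -> R) : deg_le e N ->
  exists d, deg_le d (N + k) /\ vanish0 d k /\
    forall x, peval d (N + k) x = x ^ k * peval e N x.
Proof.
  intros He. exists (fun m => if (k <=? m)%nat then e (m - k)%nat else 0).
  repeat split.
  - intros m Hm. destruct (Nat.leb_spec k m); [apply He; lia | reflexivity].
  - intros m Hm. destruct (Nat.leb_spec k m); [lia | reflexivity].
  - intros x. unfold peval.
    rewrite (sum_drop_prefix k) by
      (lia || (intros t Ht; destruct (Nat.leb_spec k t); [lia | ring])).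
    replace (N + k - k)%nat with N by lia.
    rewrite scal_sum. apply sum_eq. intros r _.
    destruct (Nat.leb_spec k (k + r)); [|lia].
    replace (k + r - k)%nat with r by lia. rewrite pow_add. ring.
Qed.

Lemma mul_1mx_pow (k l : nat) : forall (M : nat) (e : nat -> R),
  deg_le e M -> vanish0 e k ->
  exists d, deg_le d (M + l) /\ vanish0 d k /\ vanish1 d (M + l) l /\
    forall x, peval d (M + l) x = (1 - x) ^ l * peval e M x.
Proof.
  induction l as [|l IH]; intros M e He0 He1.
  - exists e. rewrite Nat.add_0_r. repeat split; auto.
    + intros j Hj. lia.
    + intros x. simpl. ring.
  - destruct (IH M e He0 He1) as [d [Hd0 [Hd1 [Hd2 Hd]]]].
    exists (mul1m d). replace (M + S l)%nat with (S (M + l)) by lia.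
    repeat split.
    + apply deg_le_mul1m, Hd0.
    + apply vanish0_mul1m, Hd1.
    + apply vanish1_mul1m; assumption.
    + intros x. rewrite peval_mul1m, Hd by exact Hd0. simpl. ring.
Qed.

Lemma in_Pi_of_factor (N k l : nat) (g : R -> R) : is_poly_le N g ->
  in_Pi (N + k + l) k l (fun x => x ^ k * (1 - x) ^ l * g x).
Proof.
  intros [e He].
  set (e' := fun m => if (m <=? N)%nat then e m else 0).
  assert (He' : deg_le e' N)
    by (intros m Hm; unfold e'; destruct (Nat.leb_spec m N); [lia | reflexivity]).
  destruct (mul_Xpow k N e' He') as [d1 [Hd1 [Hv1 E1]]].
  destruct (mul_1mx_pow k l (N + k) d1 Hd1 Hv1) as [d2 [_ [Hv2 [Hw2 E2]]]].
  apply (in_Pi_of_coeffs _ k l d2 _ Hv2 Hw2).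
  intros x. rewrite E2, E1, He. unfold peval, e'.
  rewrite (sum_eq (fun m => (if (m <=? N)%nat then e m else 0) * x ^ m)
                  (fun m => e m * x ^ m)).
  - ring.
  - intros m Hm. destruct (Nat.leb_spec m N); [reflexivity | lia].
Qed.

Lemma divide_1mx_pow (k l : nat) : forall (n : nat) (p : nat -> R),
  (l <= n)%nat -> deg_le p n -> vanish1 p n l -> vanish0 p k ->
  exists q, deg_le q (n - l) /\ vanish0 q k /\
    forall x, peval p n x = (1 - x) ^ l * peval q (n - l) x.
Proof.
  induction l as [|l IH]; intros n p Hl Hp0 Hp1 Hpk.
  - exists p. rewrite Nat.sub_0_r. repeat split; auto. intros x. simpl. ring.
  - destruct n as [|n]; [lia|].
    assert (Hroot : sum_f_R0 p (S n) = 0).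
    { rewrite <- (Hp1 0%nat) by lia. apply sum_eq. intros. simpl. ring. }
    destruct (mul1m_divide p n Hp0 Hroot) as [q [Hq ->]].
    apply (vanish1_mul1m q n l Hq) in Hp1.
    apply (vanish0_mul1m q k) in Hpk.
    destruct (IH n q ltac:(lia) Hq Hp1 Hpk) as [q' [Hq'0 [Hq'k E]]].
    exists q'. replace (S n - S l)%nat with (n - l)%nat by lia.
    repeat split; auto.
    intros x. rewrite peval_mul1m, E by exact Hq. simpl. ring.
Qed.

Lemma divide_Xpow (q : nat -> R) (M k : nat) : vanish0 q k -> (k <= M)%nat ->
  forall x, peval q M x = x ^ k * peval (fun m => q (k + m)%nat) (M - k) x.
Proof.
  intros Hq Hk x. unfold peval.
  rewrite (sum_drop_prefix k) by (lia || (intros t Ht; rewrite Hq by lia; ring)).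
  rewrite scal_sum. apply sum_eq. intros. rewrite pow_add. ring.
Qed.

Lemma factor_of_in_Pi (n k l : nat) (f : R -> R) : (k + l <= n)%nat ->
  in_Pi n k l f -> exists h, forall x,
    f x = x ^ k * (1 - x) ^ l * peval h (n - k - l) x.
Proof.
  intros Hkl Hf.
  destruct (coeffs_of_in_Pi n k l f Hf) as [d [Hd0 [Hdk [Hdl Ed]]]].
  destruct (divide_1mx_pow k l n d ltac:(lia) Hd0 Hdl Hdk) as [q [_ [Hqk Eq]]].
  exists (fun m => q (k + m)%nat). intros x.
  rewrite Ed, Eq, (divide_Xpow q (n - l) k Hqk ltac:(lia)).
  replace (n - l - k)%nat with (n - k - l)%nat by lia. ring.
Qed.

Lemma C_pos (n p : nat) : (p <= n)%nat -> 0 < C n p.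
Proof.
  intros H. unfold C. apply Rdiv_lt_0_compat; [apply INR_fact_lt_0|].
  apply Rmult_lt_0_compat; apply INR_fact_lt_0.
Qed.

Lemma U_pos (n k l j : nat) :
  (k <= j)%nat -> (j <= n - l)%nat -> (k + l <= n)%nat -> 0 < U n k l j.
Proof. intros. unfold U. apply Rdiv_lt_0_compat; apply C_pos; lia. Qed.

Lemma Bern_factor (n k l j : nat) (x : R) :
  (k <= j)%nat -> (j <= n - l)%nat -> (k + l <= n)%nat ->
  U n k l j * Bern n j x = x ^ k * (1 - x) ^ l * Bern (n - k - l) (j - k) x.
Proof.
  intros Hkj Hjl Hkl. unfold U, Bern.
  assert (0 < C n j) by (apply C_pos; lia).
  replace (x ^ j) with (x ^ k * x ^ (j - k)) by (rewrite <- pow_add; f_equal; lia).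
  replace (n - j)%nat with (l + (n - k - l - (j - k)))%nat by lia.
  rewrite !pow_add. field. lra.
Qed.

(* Bernstein expansion of a monomial, from x^m (x + (1-x))^(N-m). *)
Lemma monomial_Bern (N m : nat) (x : R) : (m <= N)%nat ->
  x ^ m = sum_f_R0 (fun q =>
    (if (m <=? q)%nat then C (N - m) (q - m) / C N q else 0) * Bern N q x) N.
Proof.
  intros Hm. rewrite (sum_drop_prefix m) by
    (lia || (intros t Ht; destruct (Nat.leb_spec m t); [lia | ring])).
  transitivity (x ^ m * (x + (1 - x)) ^ (N - m)).
  { replace (x + (1 - x)) with 1 by ring. rewrite pow1. ring. }
  rewrite binomial, scal_sum. apply sum_eq. intros i Hi.
  destruct (Nat.leb_spec m (m + i)); [|lia].
  replace (m + i - m)%nat with i by lia. unfold Bern.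
  assert (0 < C N (m + i)) by (apply C_pos; lia).
  replace (N - (m + i))%nat with (N - m - i)%nat by lia.
  rewrite pow_add. field. lra.
Qed.

Lemma peval_Bern_span (N : nat) (h : nat -> R) : forall M, (M <= N)%nat ->
  exists b : nat -> R, forall x, peval h M x = sum_f_R0 (fun q => b q * Bern N q x) N.
Proof.
  set (mono := fun m q => if (m <=? q)%nat then C (N - m) (q - m) / C N q else 0).
  induction M as [|M IH]; intros HM.
  - exists (fun q => h 0%nat * mono 0%nat q). intros x.
    change (peval h 0 x) with (h 0%nat * x ^ 0).
    rewrite (monomial_Bern N 0 x), scal_sum by lia.
    apply sum_eq. intros. unfold mono. ring.
  - destruct (IH ltac:(lia)) as [b Hb].
    exists (fun q => b q + h (S M) * mono (S M) q). intros x.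
    unfold peval. rewrite tech5. fold (peval h M x).
    rewrite Hb, (monomial_Bern N (S M) x), scal_sum, <- plus_sum by lia.
    apply sum_eq. intros. unfold mono. ring.
Qed.

Lemma in_Pi_Bern_span (n k l : nat) (f : R -> R) : (k + l <= n)%nat ->
  in_Pi n k l f -> exists b : nat -> R, forall x,
    f x = sum_f_R0 (fun r => b r * Bern n (k + r) x) (n - k - l).
Proof.
  intros Hkl Hf.
  destruct (factor_of_in_Pi n k l f Hkl Hf) as [h Eh].
  destruct (peval_Bern_span (n - k - l) h (n - k - l) (le_n _)) as [b Eb].
  exists (fun r => b r * U n k l (k + r)). intros x.
  rewrite Eh, Eb, scal_sum. apply sum_eq. intros r Hr.
  rewrite (Rmult_assoc (b r) (U n k l (k + r))), (Bern_factor n k l (k + r) x) by lia.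
  replace (k + r - k)%nat with r by lia. ring.
Qed.

Lemma ii_ext (f g : R -> R) (v : R) :
  (forall x, 0 < x < 1 -> f x = g x) -> improper_int01 f v -> improper_int01 g v.
Proof.
  intros E H eps Heps. destruct (H eps Heps) as [d [Hd Hst]].
  exists (Rmin d (1/2)). split; [apply Rmin_pos; lra|].
  intros s t Hs Ht.
  pose proof (Rmin_l d (1/2)). pose proof (Rmin_r d (1/2)).
  destruct (Hst s t ltac:(lra) ltac:(lra)) as [pr Hpr].
  assert (Eq : forall x, Rmin s t <= x <= Rmax s t -> f x = g x).
  { intros x Hx. rewrite Rmin_left, Rmax_right in Hx by lra. apply E. lra. }
  exists (Riemann_integrable_ext g Eq pr).
  replace (RiemannInt (Riemann_integrable_ext g Eq pr)) with (RiemannInt pr); [exact Hpr|].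
  apply Rle_antisym; apply RiemannInt_P19; try lra; intros x Hx; rewrite E by lra; lra.
Qed.

Lemma ii_lin (f g : R -> R) (u v a : R) :
  improper_int01 f u -> improper_int01 g v ->
  improper_int01 (fun x => f x + a * g x) (u + a * v).
Proof.
  intros Hf Hg eps Heps.
  set (A := Rabs a + 1).
  assert (HA : 0 < A) by (pose proof (Rabs_pos a); unfold A; lra).
  destruct (Hf (eps / 2) ltac:(lra)) as [d1 [Hd1 H1]].
  destruct (Hg (eps / (2 * A)) ltac:(apply Rdiv_lt_0_compat; lra)) as [d2 [Hd2 H2]].
  exists (Rmin d1 d2). split; [apply Rmin_pos; lra|].
  intros s t Hs Ht. pose proof (Rmin_l d1 d2). pose proof (Rmin_r d1 d2).
  destruct (H1 s t ltac:(lra) ltac:(lra)) as [pr1 Hp1].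
  destruct (H2 s t ltac:(lra) ltac:(lra)) as [pr2 Hp2].
  exists (RiemannInt_P10 a pr1 pr2).
  rewrite (RiemannInt_P13 pr1 pr2 (RiemannInt_P10 a pr1 pr2)).
  replace (RiemannInt pr1 + a * RiemannInt pr2 - (u + a * v)) with
    ((RiemannInt pr1 - u) + a * (RiemannInt pr2 - v)) by ring.
  eapply Rle_lt_trans; [apply Rabs_triang|]. rewrite Rabs_mult.
  assert (Rabs a * Rabs (RiemannInt pr2 - v) <= A * (eps / (2 * A))).
  { apply Rmult_le_compat; try apply Rabs_pos; [unfold A|]; lra. }
  replace (A * (eps / (2 * A))) with (eps / 2) in * by (field; lra).
  lra.
Qed.

Lemma ii_zero : improper_int01 (fun _ => 0) 0.
Proof.
  intros eps Heps. exists 1. split; [lra|]. intros s t _ _.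
  pose (pr := RiemannInt_P14 s t 0 : Riemann_integrable (fun _ => 0) s t).
  exists pr. assert (E : RiemannInt pr = 0 * (t - s)) by exact (RiemannInt_P15 pr).
  rewrite E, Rmult_0_l, Rminus_0_r, Rabs_R0. exact Heps.
Qed.

Lemma ii_scal (f : R -> R) (u a : R) :
  improper_int01 f u -> improper_int01 (fun x => a * f x) (a * u).
Proof.
  intros H. pose proof (ii_lin _ _ _ _ a ii_zero H) as H'.
  rewrite Rplus_0_l in H'. exact (ii_ext _ _ _ (fun x _ => Rplus_0_l _) H').
Qed.

Lemma ii_sum (N : nat) (a : nat -> R) (f : nat -> R -> R) :
  (forall q, (q <= N)%nat -> improper_int01 (f q) 0) ->
  improper_int01 (fun x => sum_f_R0 (fun q => a q * f q x) N) 0.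
Proof.
  induction N as [|N IH]; intros H; simpl.
  - rewrite <- (Rmult_0_r (a 0%nat)). apply ii_scal, H. lia.
  - pose proof (ii_lin _ _ _ _ (a (S N)) (IH ltac:(intros; apply H; lia))
                  (H (S N) ltac:(lia))) as H'.
    rewrite Rmult_0_r, Rplus_0_r in H'. exact H'.
Qed.

Lemma RiemannInt_lower_bound (g : R -> R) (s a b t m : R)
  (pr : Riemann_integrable g s t) :
  s <= a -> a <= b -> b <= t ->
  (forall y, s <= y <= t -> 0 <= g y) -> (forall y, a <= y <= b -> m <= g y) ->
  m * (b - a) <= RiemannInt pr.
Proof.
  intros Hsa Hab Hbt Hpos Hm.
  assert (Hat : a <= b <= t) by lra. assert (Hsat : s <= a <= t) by lra.
  pose proof (RiemannInt_P22 pr Hsat) as pr_sa.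
  pose proof (RiemannInt_P23 pr Hsat) as pr_at.
  pose proof (RiemannInt_P22 pr_at Hat) as pr_ab.
  pose proof (RiemannInt_P23 pr_at Hat) as pr_bt.
  rewrite <- (RiemannInt_P26 pr_sa pr_at pr), <- (RiemannInt_P26 pr_ab pr_bt pr_at).
  assert (I_sa : 0 <= RiemannInt pr_sa).
  { rewrite <- (Rmult_0_l (a - s)), <- (RiemannInt_P15 (RiemannInt_P14 s a 0)).
    apply RiemannInt_P19; [lra|]. intros y Hy. apply Hpos. lra. }
  assert (I_bt : 0 <= RiemannInt pr_bt).
  { rewrite <- (Rmult_0_l (t - b)), <- (RiemannInt_P15 (RiemannInt_P14 b t 0)).
    apply RiemannInt_P19; [lra|]. intros y Hy. apply Hpos. lra. }
  assert (I_ab : m * (b - a) <= RiemannInt pr_ab).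
  { rewrite <- (RiemannInt_P15 (RiemannInt_P14 a b m)).
    apply RiemannInt_P19; [lra|]. intros y Hy. apply Hm. lra. }
  lra.
Qed.

Lemma continuity_pos_near (g : R -> R) (x0 : R) :
  continuity_pt g x0 -> 0 < g x0 ->
  exists r, 0 < r /\ forall y, Rabs (y - x0) <= r -> g x0 / 2 <= g y.
Proof.
  intros Hc Hpos.
  destruct (Hc (g x0 / 2) ltac:(lra)) as [alp [Halp Hal]].
  exists (alp / 2). split; [lra|]. intros y Hy.
  destruct (Req_dec y x0) as [->|Hne]; [lra|].
  assert (Hy' : D_x no_cond x0 y /\ R_dist y x0 < alp)
    by (repeat split; auto; unfold R_dist; lra).
  specialize (Hal y Hy'). simpl in Hal. unfold R_dist in Hal.
  apply Rabs_def2 in Hal. lra.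
Qed.

Lemma ii_nonneg_zero (g : R -> R) : improper_int01 g 0 ->
  (forall x, 0 < x < 1 -> 0 <= g x) ->
  (forall x, 0 < x < 1 -> continuity_pt g x) ->
  forall x, 0 < x < 1 -> g x = 0.
Proof.
  intros Hint Hpos Hc x0 Hx0.
  destruct (Rle_lt_or_eq_dec 0 (g x0) (Hpos x0 Hx0)) as [Hgt|]; [exfalso | auto].
  destruct (continuity_pos_near g x0 (Hc x0 Hx0) Hgt) as [r0 [Hr0 Hnear]].
  set (r := Rmin r0 (Rmin (x0 / 2) ((1 - x0) / 2))).
  assert (Hr : 0 < r /\ r <= r0 /\ r <= x0 / 2 /\ r <= (1 - x0) / 2).
  { pose proof (Rmin_l r0 (Rmin (x0 / 2) ((1 - x0) / 2))).
    pose proof (Rmin_r r0 (Rmin (x0 / 2) ((1 - x0) / 2))).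
    pose proof (Rmin_l (x0 / 2) ((1 - x0) / 2)).
    pose proof (Rmin_r (x0 / 2) ((1 - x0) / 2)).
    repeat split; try (unfold r; lra). unfold r. repeat apply Rmin_pos; lra. }
  destruct (Hint (g x0 * r) ltac:(nra)) as [d [Hd Hst]].
  set (s := Rmin d (x0 - r) / 2). set (t := 1 - Rmin d (1 - x0 - r) / 2).
  assert (Hs : 0 < s < d /\ s <= x0 - r).
  { unfold s. pose proof (Rmin_l d (x0 - r)). pose proof (Rmin_r d (x0 - r)).
    pose proof (Rmin_pos d (x0 - r) Hd ltac:(lra)). lra. }
  assert (Ht : 1 - d < t < 1 /\ x0 + r <= t).
  { unfold t. pose proof (Rmin_l d (1 - x0 - r)). pose proof (Rmin_r d (1 - x0 - r)).
    pose proof (Rmin_pos d (1 - x0 - r) Hd ltac:(lra)). lra. }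
  destruct (Hst s t ltac:(lra) ltac:(lra)) as [pr Hpr].
  pose proof (RiemannInt_lower_bound g s (x0 - r) (x0 + r) t (g x0 / 2) pr
    ltac:(lra) ltac:(lra) ltac:(lra)
    ltac:(intros y Hy; apply Hpos; lra)
    ltac:(intros y Hy; apply Hnear, Rabs_le; lra)) as Hlow.
  rewrite Rminus_0_r in Hpr. apply Rabs_def2 in Hpr. lra.
Qed.

Lemma cont_peval (d : nat -> R) (n : nat) (x : R) : continuity_pt (peval d n) x.
Proof.
  induction n as [|n IH].
  - apply (continuity_pt_scal (fun y => y ^ 0) (d 0%nat)).
    apply derivable_continuous_pt, derivable_pt_pow.
  - apply (continuity_pt_plus (peval d n) (fun y => d (S n) * y ^ S n)); [exact IH|].
    apply (continuity_pt_scal (fun y => y ^ S n) (d (S n))).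
    apply derivable_continuous_pt, derivable_pt_pow.
Qed.

Lemma cont_Rpower (a z : R) : 0 < z -> continuity_pt (fun y => Rpower y a) z.
Proof.
  intros Hz. apply derivable_continuous_pt. exists (a * Rpower z (a - 1)).
  apply derivable_pt_lim_power, Hz.
Qed.

Lemma cont_weight (a b x : R) : 0 < x < 1 -> continuity_pt (weight a b) x.
Proof.
  intros Hx.
  apply (continuity_pt_mult (fun y => Rpower (1 - y) a) (fun y => Rpower y b)).
  - apply (continuity_pt_comp (fun y => 1 - y) (fun z => Rpower z a)).
    + apply derivable_continuous_pt.
      exact (derivable_pt_minus (fct_cte 1) id x (derivable_pt_const 1 x) (derivable_pt_id x)).
    + apply cont_Rpower. lra.
  - apply cont_Rpower. lra.
Qed.

Lemma weight_pos (a b x : R) : 0 < weight a b x.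
Proof. unfold weight, Rpower. apply Rmult_lt_0_compat; apply exp_pos. Qed.

Lemma peval_bound01 (d : nat -> R) (n : nat) (y : R) : 0 <= y <= 1 ->
  Rabs (peval d n y) <= sum_f_R0 (fun m => Rabs (d m)) n.
Proof.
  intros Hy. eapply Rle_trans; [apply Rsum_abs|]. apply sum_Rle. intros m _.
  rewrite Rabs_mult, <- RPow_abs, (Rabs_pos_eq y) by lra.
  rewrite <- (Rmult_1_r (Rabs (d m))) at 2.
  apply Rmult_le_compat_l; [apply Rabs_pos|].
  rewrite <- (pow1 m). apply pow_incr. lra.
Qed.

Lemma peval_horner (d : nat -> R) (n : nat) (y : R) :
  peval d (S n) y = d 0%nat + y * peval (fun m => d (S m)) n y.
Proof.
  unfold peval. rewrite decomp_sum, scal_sum by lia. simpl pred.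
  f_equal; [simpl; ring|]. apply sum_eq. intros. simpl. ring.
Qed.

Lemma small_const_zero (a M : R) : 0 <= M ->
  (forall y, 0 < y < 1 -> Rabs a <= y * M) -> a = 0.
Proof.
  intros HM H. destruct (Req_dec a 0) as [|Ha]; [assumption | exfalso].
  assert (Hpos : 0 < Rabs a) by (apply Rabs_pos_lt, Ha).
  set (y := Rmin (1 / 2) (Rabs a / (2 * (M + 1)))).
  assert (Hy1 : y <= 1 / 2) by apply Rmin_l.
  assert (Hy2 : y <= Rabs a / (2 * (M + 1))) by apply Rmin_r.
  assert (Hy0 : 0 < y) by (apply Rmin_pos; [lra | apply Rdiv_lt_0_compat; lra]).
  specialize (H y ltac:(lra)).
  assert (y * M <= Rabs a / (2 * (M + 1)) * M) by (apply Rmult_le_compat_r; lra).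
  assert (Rabs a / (2 * (M + 1)) * M < Rabs a).
  { apply Rmult_lt_reg_r with (2 * (M + 1)); [lra|].
    replace (Rabs a / (2 * (M + 1)) * M * (2 * (M + 1))) with (Rabs a * M)
      by (field; lra).
    nra. }
  lra.
Qed.

Lemma peval_zero_on_01 (n : nat) : forall d : nat -> R,
  (forall x, 0 < x < 1 -> peval d n x = 0) -> forall x, peval d n x = 0.
Proof.
  induction n as [|n IH]; intros d H x.
  - specialize (H (1 / 2) ltac:(lra)). unfold peval in *. simpl in *. lra.
  - set (M := sum_f_R0 (fun m => Rabs (d (S m))) n).
    assert (HM : 0 <= M) by (apply cond_pos_sum; intros; apply Rabs_pos).
    assert (H0 : d 0%nat = 0).
    { apply (small_const_zero _ M HM). intros y Hy.
      pose proof (H y Hy) as Hz. rewrite peval_horner in Hz.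
      replace (d 0%nat) with (- (y * peval (fun m => d (S m)) n y)) by lra.
      rewrite Rabs_Ropp, Rabs_mult, (Rabs_pos_eq y) by lra.
      apply Rmult_le_compat_l; [lra|]. apply peval_bound01. lra. }
    assert (Htail : forall y, peval (fun m => d (S m)) n y = 0).
    { apply IH. intros y Hy. pose proof (H y Hy) as Hz.
      rewrite peval_horner, H0, Rplus_0_l in Hz.
      apply Rmult_integral in Hz. destruct Hz; [lra | assumption]. }
    rewrite peval_horner, H0, Htail. ring.
Qed.

(* An element of Pi_n^(k,l) orthogonal to B^n_k, ..., B^n_(n-l) is zero:
   it is orthogonal to itself. *)
Lemma in_Pi_orth_zero (n k l : nat) (a b : R) (E : R -> R) : (k + l <= n)%nat ->
  in_Pi n k l E ->
  (forall j, (k <= j <= n - l)%nat ->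
     improper_int01 (fun y => weight a b y * E y * Bern n j y) 0) ->
  forall x, E x = 0.
Proof.
  intros Hkl HE Horth.
  destruct (in_Pi_Bern_span n k l E Hkl HE) as [c Ec].
  destruct (coeffs_of_in_Pi n k l E HE) as [d [_ [_ [_ Ed]]]].
  assert (Hd : E = peval d n) by (apply functional_extensionality; exact Ed).
  subst E.
  assert (Hnorm : improper_int01 (fun y => weight a b y * peval d n y * peval d n y) 0).
  { apply (ii_ext (fun y => sum_f_R0 (fun r => c r *
             (weight a b y * peval d n y * Bern n (k + r) y)) (n - k - l))).
    - intros y _. replace (weight a b y * peval d n y * peval d n y) with
        (weight a b y * peval d n y *
         sum_f_R0 (fun r => c r * Bern n (k + r) y) (n - k - l)) by (rewrite <- Ec; ring).
      rewrite scal_sum. apply sum_eq. intros. ring.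
    - apply ii_sum. intros r Hr. apply Horth. lia. }
  assert (Hzero : forall y, 0 < y < 1 -> weight a b y * peval d n y * peval d n y = 0).
  { apply (ii_nonneg_zero _ Hnorm).
    - intros y _. pose proof (weight_pos a b y). nra.
    - intros y Hy.
      apply (continuity_pt_mult (fun y => weight a b y * peval d n y)); [|apply cont_peval].
      apply (continuity_pt_mult (weight a b)); [apply cont_weight, Hy | apply cont_peval]. }
  apply peval_zero_on_01. intros y Hy. specialize (Hzero y Hy).
  pose proof (weight_pos a b y).
  rewrite Rmult_assoc in Hzero. apply Rmult_integral in Hzero.
  destruct Hzero as [|Hsq]; [lra|]. apply Rmult_integral in Hsq. tauto.
Qed.

Lemma cdual_unique (n k l : nat) (al be : R) (i : nat) (D1 D2 : R -> R) :
  (k + l <= n)%nat -> is_cdual n k l al be i D1 -> is_cdual n k l al be i D2 ->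
  forall x, D1 x = D2 x.
Proof.
  intros Hkl [HPi1 Horth1] [HPi2 Horth2] x.
  cut (D1 x - D2 x = 0); [lra|].
  apply (in_Pi_orth_zero n k l al be (fun y => D1 y - D2 y) Hkl).
  - apply in_Pi_sub; assumption.
  - intros j Hj.
    pose proof (ii_lin _ _ _ _ (-1) (Horth1 j Hj) (Horth2 j Hj)) as H.
    replace (kron i j + -1 * kron i j) with 0 in H by ring.
    eapply ii_ext; [|exact H]. intros y _. cbv beta. ring.
Qed.

Lemma weight_shift (al be x : R) (k l : nat) : 0 < x < 1 ->
  weight (al + 2 * INR l) (be + 2 * INR k) x =
  weight al be x * (x ^ k * (1 - x) ^ l) ^ 2.
Proof.
  intros Hx. unfold weight. rewrite !Rpower_plus.
  replace (2 * INR l) with (INR (l + l)) by (rewrite plus_INR; ring).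
  replace (2 * INR k) with (INR (k + k)) by (rewrite plus_INR; ring).
  rewrite !Rpower_pow by lra. rewrite !pow_add. ring.
Qed.

Lemma kron_sub (k i j : nat) : (k <= i)%nat -> (k <= j)%nat ->
  kron (i - k) (j - k) = kron i j.
Proof.
  intros. unfold kron.
  destruct (Nat.eqb_spec i j), (Nat.eqb_spec (i - k) (j - k)); lia || reflexivity.
Qed.

Lemma kron_scale (a : nat -> R) (i j : nat) : a j <> 0 -> a i / a j * kron i j = kron i j.
Proof.
  intros Hj. unfold kron. destruct (Nat.eqb_spec i j) as [->|]; field; exact Hj.
Qed.

Lemma cdual_of_udual (n k l : nat) (al be : R) (i : nat) (g D : R -> R) :
  (k + l <= n)%nat -> (k <= i <= n - l)%nat ->
  is_udual (n - k - l) (al + 2 * INR l) (be + 2 * INR k) (i - k) g ->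
  (forall x, D x = U n k l i * (x ^ k * (1 - x) ^ l * g x)) ->
  is_cdual n k l al be i D.
Proof.
  intros Hkl Hi [[e He] Horth] HD.
  assert (Ui : 0 < U n k l i) by (apply U_pos; lia).
  split.
  - destruct (in_Pi_of_factor (n - k - l) k l (fun x => U n k l i * g x))
      as [d [Hd Hd01]].
    { exists (fun m => U n k l i * e m). intros x. rewrite He, scal_sum.
      apply sum_eq. intros. ring. }
    replace (n - k - l + k + l)%nat with n in * by lia.
    exists d. split; [|exact Hd01]. intros x. rewrite HD, <- Hd. ring.
  - intros j Hj.
    assert (Uj : 0 < U n k l j) by (apply U_pos; lia).
    rewrite <- (kron_scale (U n k l) i j), <- (kron_sub k i j) by (lra || lia).
    apply (ii_ext (fun x => U n k l i / U n k l j *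
      (weight (al + 2 * INR l) (be + 2 * INR k) x * g x * Bern (n - k - l) (j - k) x))).
    + intros x Hx. rewrite weight_shift, HD by lra.
      pose proof (Bern_factor n k l j x ltac:(lia) ltac:(lia) Hkl) as HB.
      replace (Bern n j x) with
        (x ^ k * (1 - x) ^ l * Bern (n - k - l) (j - k) x / U n k l j)
        by (rewrite <- HB; field; lra).
      field. lra.
    + apply ii_scal, Horth. lia.
Qed.

Lemma Ccoef_sum_factor (n k l : nat) (c : nat -> nat -> R) (i : nat) (x : R) :
  (k + l <= n)%nat ->
  rsum k (n - l) (fun j => Ccoef c n k l i j * Bern n j x) =
  U n k l i * (x ^ k * (1 - x) ^ l *
    sum_f_R0 (fun q => c (i - k)%nat q * Bern (n - k - l) q x) (n - k - l)).
Proof.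
  intros Hkl. unfold rsum. destruct (Nat.ltb_spec (n - l) k); [lia|].
  replace (n - l - k)%nat with (n - k - l)%nat by lia.
  rewrite !scal_sum. apply sum_eq. intros r Hr. unfold Ccoef.
  replace (U n k l i * U n k l (k + r) * c (i - k)%nat (k + r - k)%nat * Bern n (k + r) x)
    with (U n k l i * c (i - k)%nat (k + r - k)%nat * (U n k l (k + r) * Bern n (k + r) x))
    by ring.
  rewrite Bern_factor by lia. replace (k + r - k)%nat with r by lia. ring.
Qed.

(* Theorem 3.2.  The hypotheses -1 < al, be only serve to make the
   unconstrained duals exist; the argument itself does not use them. *)
Theorem theorem3p2 (n k l : nat) (al be : R) (c : nat -> nat -> R) :
  (k + l <= n)%nat -> -1 < al -> -1 < be ->
  (forall p, (p <= n - k - l)%nat ->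
     is_udual (n - k - l) (al + 2 * INR l) (be + 2 * INR k) p
       (fun x => sum_f_R0 (fun q => c p q * Bern (n - k - l) q x) (n - k - l))) ->
  forall i, (k <= i <= n - l)%nat ->
    is_cdual n k l al be i
      (fun x => rsum k (n - l) (fun j => Ccoef c n k l i j * Bern n j x)) /\
    (forall D : R -> R, is_cdual n k l al be i D ->
       forall x, D x = rsum k (n - l) (fun j => Ccoef c n k l i j * Bern n j x)).
Proof.
  intros Hkl _ _ Hudual i Hi.
  assert (Hexists : is_cdual n k l al be i
            (fun x => rsum k (n - l) (fun j => Ccoef c n k l i j * Bern n j x))).
  { apply (cdual_of_udual n k l al be i _ _ Hkl Hi (Hudual (i - k)%nat ltac:(lia))).
    intros x. apply Ccoef_sum_factor, Hkl. }
  split; [exact Hexists|].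
  intros D HD. exact (cdual_unique n k l al be i D _ Hkl HD Hexists).
Qed.
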